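(* Let $G=(V,E,\omega)\in\mathcal G$, $\gamma\geq0$, $\tau>0$, and $M\geq0$. Let $J_\tau(u):=\langle\chi_V-u,e^{-\tau L}u\rangle_{\mathcal V}$, $v^0\in\mathcal V^{ab}_M$, and let $\{v^k\}_{k=1}^N\subset\mathcal V^{ab}_M$ ($N\in\mathbb N\cup\{\infty\}$) be a sequence generated by the mcOKMBO scheme. Then for all $k\in\{1,\dots,N\}$, $v^k\in\operatorname{argmin}_{v\in\mathcal K_M}dJ^{v^{k-1}}_\tau(v)$, where $dJ^u_\tau(v):=\langle\chi_V-2e^{-\tau L}u,v\rangle_{\mathcal V}$. Moreover, for all $k\in\{1,\dots,N\}$, $J_\tau(v^k)\leq J_\tau(v^{k-1})$ with equality if and only if $v^k=v^{k-1}$. Finally, there is $K\geq0$ such that $v^k=v^K$ for all $k\geq K$.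
   Context: $\mathcal{G}$ is the set of finite, simple, connected, undirected, edge-weighted graphs $G=(V,E,\omega)$ with $V=\{1,\dots,n\}$, $n\geq2$, weights $\omega_{ij}=\omega_{ji}>0$ on edges, $0$ otherwise. $d_i=\sum_j\omega_{ij}$. $\mathcal V$: functions $V\to\mathbb R$. Fixed $r\in[0,1]$: $\langle u,v\rangle_{\mathcal V}=\sum_id_i^ru_iv_i$, $(\Delta u)_i=d_i^{-r}\sum_j\omega_{ij}(u_i-u_j)$, $\mathcal M(u)=\sum_id_i^ru_i$, $\mathcal A(u)=\frac{\mathcal M(u)}{\sum_id_i^r}\chi_V$ ($\chi_S$ indicator of $S$). For $u\in\mathcal V$ let $\varphi$ be the unique solution of $\Delta\varphi=u-\mathcal A(u)$, $\mathcal M(\varphi)=0$, and $Lu:=\Delta u+\gamma\varphi$; $e^{-\tau L}$ its exponential. $\mathcal K_M$: $[0,1]$-valued $u\in\mathcal V$ with $\mathcal M(u)=M$. $\mathcal V^{ab}_M$: the set of $u\in\mathcal K_M$ for which there is $i\in V$ with $u_j\in\{0,1\}$ for all $j\neq i$. mcOKMBO scheme: for $k=1,\dots,N$, let $u=e^{-\tau L}v^{k-1}$ (the time-$\tau$ solution of $du/dt=-Lu$, $u(0)=v^{k-1}$); choose a bijection $R:V\to\{1,\dots,n\}$ such that $R(i)<R(j)$ implies $u_i\geq u_j$ (ties broken arbitrarily), and write $\ell_p:=R^{-1}(p)$; let $i^*$ be the largest index with $\sum_{p=1}^{i^*}d_{\ell_p}^r\leq M$; define $v^k_{\ell_p}=1$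 for $p\leq i^*$, $v^k_{\ell_{i^*+1}}=d_{\ell_{i^*+1}}^{-r}\big(M-\sum_{p=1}^{i^*}d_{\ell_p}^r\big)$, and $v^k_{\ell_p}=0$ for $p\geq i^*+2$. *)

From HB Require Import structures.
From mathcomp Require Import all_boot all_order all_algebra.
From mathcomp Require Import all_classical all_reals all_analysis.
Set Implicit Arguments. Unset Strict Implicit. Unset Printing Implicit Defensive.
Import Order.TTheory GRing.Theory Num.Theory.
Import numFieldNormedType.Exports.
Local Open Scope ring_scope.

Section Graph.
Variables (R : realType) (n : nat).
(* vertices are 'I_n (i.e. {0,...,n-1} for {1,...,n}); functions on V are 'I_n -> R *)
Variables (w : 'I_n -> 'I_n -> R) (r gamma : R).

Definition is_graph : Prop :=
  [/\ (2 <= n)%N,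
      (forall i j, w i j = w j i),
      (forall i j, 0 <= w i j),
      (forall i, w i i = 0) &
      (forall i j, connect [rel a b | 0 < w a b] i j)].

Definition deg (i : 'I_n) : R := \sum_j w i j.
Definition dr (i : 'I_n) : R := powR (deg i) r.

Definition ipV (u v : 'I_n -> R) : R := \sum_i dr i * u i * v i.
Definition Lap (u : 'I_n -> R) : 'I_n -> R :=
  fun i => (dr i)^-1 * \sum_j w i j * (u i - u j).
Definition mass (u : 'I_n -> R) : R := \sum_i dr i * u i.
Definition avg (u : 'I_n -> R) : 'I_n -> R :=
  fun _ => mass u / \sum_i dr i.

Definition phi (u : 'I_n -> R) : 'I_n -> R :=
  xget (fun _ => 0) [set p | Lap p = (fun i => u i - avg u i) /\ mass p = 0].

Definition Lop (u : 'I_n -> R) : 'I_n -> R :=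
  fun i => Lap u i + gamma * phi u i.

Definition expL (tau : R) (u : 'I_n -> R) : 'I_n -> R :=
  fun i => limn ((series (fun k : nat =>
              (- tau) ^+ k / (k`!)%:R * iter k Lop u i)) : R^nat).

Definition chiV : 'I_n -> R := fun _ => 1.

Definition Jtau (tau : R) (u : 'I_n -> R) : R :=
  ipV (fun i => chiV i - u i) (expL tau u).

Definition dJ (tau : R) (u v : 'I_n -> R) : R :=
  ipV (fun i => chiV i - 2 * expL tau u i) v.

Definition KM (M : R) (u : 'I_n -> R) : Prop :=
  (forall i, 0 <= u i <= 1) /\ mass u = M.

Definition VabM (M : R) (u : 'I_n -> R) : Prop :=
  KM M u /\ exists i, forall j, j != i -> u j = 0 \/ u j = 1.

(* One step of the mcOKMBO scheme: vnew is obtained from vold, with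
   positions p = 0..n-1 standing for 1..n, l p = R^{-1}(p+1). *)
Definition mcOKMBO_step (tau M : R) (vold vnew : 'I_n -> R) : Prop :=
  let u := expL tau vold in
  exists l : 'I_n -> 'I_n, bijective l /\
   (forall p q : 'I_n, (p < q)%N -> u (l q) <= u (l p)) /\
   let S := fun m : nat => \sum_(p < n | (p < m)%N) dr (l p) in
   exists istar : nat,
     [/\ (istar <= n)%N, S istar <= M,
         (forall j : nat, (istar < j <= n)%N -> M < S j) &
         (forall p : 'I_n,
            vnew (l p) =
              if (p < istar)%N then 1
              else if (p == istar :> nat) then (dr (l p))^-1 * (M - S istar)
              else 0)].

End Graph.

(* N in nat u {oo}: None stands for oo *)
Definition le_N (k : nat) (N : option nat) : bool :=
  if N is Some m then (k <= m)%N else true.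

From HB Require Import structures.
From mathcomp Require Import all_boot all_order all_algebra.
From mathcomp Require Import all_classical all_reals all_analysis.
From mathcomp Require Import perm ring lra zify.
Set Implicit Arguments. Unset Strict Implicit. Unset Printing Implicit Defensive.
Import Order.TTheory GRing.Theory Num.Theory.
Import numFieldNormedType.Exports.
Local Open Scope ring_scope.

(* An mcOKMBO step minimises the linear functional dJ^{v^{k-1}} over K_M by the
   bathtub principle: it fills the vertices in decreasing order of e^{-tau L} v^{k-1}.
   L is linear and self-adjoint for the d^r-weighted inner product, hence so is
   e^{-tau L}, which is moreover positive definite:
   <x, e^{-tau L} x> = |e^{-tau L/2} x|^2 and e^{-tau L/2} is injective.
   For u, v of mass M,
     J(u) - J(v) = dJ^u(u) - dJ^u(v) + <v - u, e^{-tau L} (v - u)>,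
   so a step strictly decreases J unless it is stationary.  The scheme only produces
   finitely many states (a ranking and a cut-off index), so the sequence stabilises
   once J reaches its least value along it. *)

Lemma bathtub_principle (R : numDomainType) (n : nat) (d c v u : 'I_n -> R)
    (l : 'I_n -> 'I_n) (m : nat) :
  (forall i, 0 <= d i) -> bijective l ->
  (forall p q : 'I_n, (p < q)%N -> c (l p) <= c (l q)) ->
  (forall p : 'I_n, (p < m)%N -> v (l p) = 1) ->
  (forall p : 'I_n, (m < p)%N -> v (l p) = 0) ->
  (forall i, 0 <= u i <= 1) ->
  \sum_i d i * v i = \sum_i d i * u i ->
  \sum_i d i * c i * v i <= \sum_i d i * c i * u i.
Proof.
move=> d_ge0 l_bij c_sorted v_low v_high u01 same_mass.
have [n0|n_gt0] := posnP n.
  by rewrite !big1 // => i; move: (ltn_ord i); rewrite {2}n0.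
have reindex_l (F : 'I_n -> R) : \sum_i F i = \sum_p F (l p).
  by rewrite (reindex l) //; apply: onW_bij.
pose a p := d (l p) * (v (l p) - u (l p)).
have sum_a : \sum_p a p = 0.
  rewrite /a; under eq_bigr do rewrite mulrBr.
  rewrite sumrB -(reindex_l (fun i => d i * v i)) -(reindex_l (fun i => d i * u i)).
  by rewrite same_mass subrr.
(* As [\sum_p a p = 0] the costs may be shifted by [c (l q)]; [a p] changes sign at
   the pivot [q], so every shifted term is nonpositive. *)
have q_lt : (minn m n.-1 < n)%N by rewrite (leq_ltn_trans (geq_minr _ _)) ?ltn_predL.
pose q := Ordinal q_lt.
rewrite -subr_le0 -sumrB reindex_l.
have -> : \sum_p (d (l p) * c (l p) * v (l p) - d (l p) * c (l p) * u (l p))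
    = \sum_p (c (l p) - c (l q)) * a p + c (l q) * \sum_p a p.
  by rewrite mulr_sumr -big_split; apply: eq_bigr => p _ /=; rewrite /a; ring.
rewrite sum_a mulr0 addr0; apply: sumr_le0 => p _.
have [pq|qp|/val_inj ->] := ltngtP p q; last by rewrite subrr mul0r.
- have pm : (p < m)%N by apply: leq_trans pq (geq_minl _ _).
  rewrite mulr_le0_ge0 ?subr_le0 ?c_sorted // /a v_low // mulr_ge0 // subr_ge0.
  by case/andP: (u01 (l p)).
- have mp : (m < p)%N by move: qp (ltn_ord p) => /=; lia.
  rewrite mulr_ge0_le0 ?subr_ge0 ?c_sorted // /a v_high // sub0r mulrN oppr_le0.
  by rewrite mulr_ge0 //; case/andP: (u01 (l p)).
Qed.

Section LinearMaps.
Variables (K : pzRingType) (U V : lmodType K) (F : U -> V).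
Hypothesis F_lin : linear F.

Let F_linear : {linear U -> V} := HB.pack F (GRing.isLinear.Build _ _ _ _ F F_lin).

Lemma linear_map0 : F 0 = 0. Proof. exact: (linear0 F_linear). Qed.
Lemma linear_mapD u v : F (u + v) = F u + F v. Proof. exact: (linearD F_linear). Qed.
Lemma linear_mapB u v : F (u - v) = F u - F v. Proof. exact: (linearB F_linear). Qed.
Lemma linear_mapZ a u : F (a *: u) = a *: F u. Proof. exact: (linearZ_LR F_linear). Qed.

End LinearMaps.

Section LinearEndomorphisms.
Variables (R : numFieldType) (n : nat) (F : ('I_n -> R) -> 'I_n -> R).
Hypothesis F_lin : linear F.

Definition unit_fun (i : 'I_n) : 'I_n -> R := fun j => (i == j)%:R.

Definition norm1 (u : 'I_n -> R) := \sum_i `|u i|.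

Lemma norm_le_norm1 u i : `|u i| <= norm1 u.
Proof. by rewrite /norm1 (bigD1 i) //= lerDl sumr_ge0. Qed.

Lemma linear_iter k : linear (iter k F).
Proof. by elim: k => [|k IH] a u v //=; rewrite IH F_lin. Qed.

Lemma linear_unit_funE u j : F u j = \sum_i u i * F (unit_fun i) j.
Proof.
have u_decomp : u = \sum_i u i *: unit_fun i.
  apply/funext => k; rewrite fct_sumE (bigD1 k) //= big1 => [|i /negPf ik].
    by rewrite scalrfctE /unit_fun eqxx addr0 -[RHS]/(u k * 1) mulr1.
  by rewrite scalrfctE /unit_fun ik -[LHS]/(u i * 0) mulr0.
rewrite {1}u_decomp; apply: (big_rec2 (fun x y => F x j = y)) => [|i x _ _ <-].
  by rewrite linear_map0.
by rewrite F_lin.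
Qed.

Lemma linear_surj_of_ker0 : (forall u, F u = 0 -> u = 0) -> forall f, exists u, F u = f.
Proof.
move=> F_ker0 f; pose A : 'M[R]_n := \matrix_(i, j) F (unit_fun i) j.
have mulA (x : 'rV[R]_n) : x *m A = \row_j F (fun i => x 0 i) j.
  apply/rowP => j; rewrite !mxE linear_unit_funE.
  by apply: eq_bigr => i _; rewrite mxE.
have A_unit : A \in unitmx.
  rewrite -row_free_unit; apply: inj_row_free => x; rewrite mulA => /rowP x_ker.
  have /F_ker0 x0 : F (fun i => x 0 i) = 0.
    by apply/funext => j; have := x_ker j; rewrite !mxE.
  by apply/rowP => i; rewrite mxE (congr1 (fun g => g i) x0).
pose y : 'rV[R]_n := \row_j f j.
exists (fun i => (y *m invmx A) 0 i); apply/funext => j.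
by have /(congr1 (fun B : 'rV[R]_n => B 0 j)) := mulmxKV A_unit y; rewrite mulA !mxE.
Qed.

Lemma linear_norm1_bounded : exists2 C, 0 <= C & forall u, norm1 (F u) <= C * norm1 u.
Proof.
exists (\sum_i \sum_j `|F (unit_fun i) j|) => [|u].
  by rewrite sumr_ge0 // => i _; rewrite sumr_ge0.
apply: (@le_trans _ _ (\sum_j \sum_i `|u i| * `|F (unit_fun i) j|)).
  apply: ler_sum => j _; rewrite linear_unit_funE.
  by apply: le_trans (ler_norm_sum _ _ _) _; apply: ler_sum => i _; rewrite normrM.
rewrite exchange_big mulr_suml /=; apply: ler_sum => i _.
by rewrite -mulr_sumr mulrC ler_wpM2l ?sumr_ge0 ?norm_le_norm1.
Qed.

End LinearEndomorphisms.

Section GraphLaplacian.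
Variables (R : realType) (n : nat) (w : 'I_n -> 'I_n -> R) (r gamma : R).
Hypothesis graph_w : is_graph w.

Let w_sym i j : w i j = w j i. Proof. by case: graph_w. Qed.
Let w_ge0 i j : 0 <= w i j. Proof. by case: graph_w. Qed.
Let w_connected i j : connect [rel a b | 0 < w a b] i j. Proof. by case: graph_w. Qed.
Let n_gt1 : (1 < n)%N. Proof. by case: graph_w. Qed.

Lemma deg_gt0 i : 0 < deg w i.
Proof.
have [j ji] : exists j : 'I_n, j != i.
  have n_gt0 : (0 < n)%N by apply: ltnW.
  case: (eqVneq i (Ordinal n_gt0)) => [->|]; first by exists (Ordinal n_gt1).
  by exists (Ordinal n_gt0); rewrite eq_sym.
have /connectP [[|x p] /= path_ij ji_eq] := w_connected i j.
  by rewrite ji_eq eqxx in ji.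
case/andP: path_ij => w_ix _.
by rewrite /deg (bigD1 x) //= ltr_pwDl ?sumr_ge0.
Qed.

Lemma dr_gt0 i : 0 < dr w r i.
Proof. by rewrite powR_gt0 ?deg_gt0. Qed.

Lemma sum_dr_gt0 : 0 < \sum_i dr w r i.
Proof.
have n_gt0 : (0 < n)%N by apply: ltnW.
rewrite (bigD1 (Ordinal n_gt0)) //= ltr_pwDl ?dr_gt0 //.
by rewrite sumr_ge0 // => i _; apply/ltW/dr_gt0.
Qed.

Definition dirichlet (u v : 'I_n -> R) := \sum_i \sum_j w i j * (u i - u j) * v i.

Lemma ipV_LapE u v : ipV w r (Lap w r u) v = dirichlet u v.
Proof.
apply: eq_bigr => i _; rewrite mulrA mulfV ?mul1r ?mulr_suml //.
by rewrite gt_eqF ?dr_gt0.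
Qed.

Lemma dirichlet_symmetrized u v :
  dirichlet u v *+ 2 = \sum_i \sum_j w i j * ((u i - u j) * (v i - v j)).
Proof.
have swap : dirichlet u v = \sum_i \sum_j w i j * (u i - u j) * - v j.
  rewrite /dirichlet exchange_big /=; apply: eq_bigr => i _; apply: eq_bigr => j _.
  by rewrite w_sym; ring.
rewrite mulr2n {2}swap -big_split /=; apply: eq_bigr => i _.
by rewrite -big_split /=; apply: eq_bigr => j _; ring.
Qed.

Lemma dirichlet_sym u v : dirichlet u v = dirichlet v u.
Proof.
have : dirichlet u v *+ 2 = dirichlet v u *+ 2.
  rewrite !dirichlet_symmetrized.
  by apply: eq_bigr => i _; apply: eq_bigr => j _; rewrite [(v i - v j) * _]mulrC.
by move/eqP; rewrite eqrMn2r => /eqP.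
Qed.

Lemma ipV_sym u v : ipV w r u v = ipV w r v u.
Proof. by apply: eq_bigr => i _; rewrite mulrAC. Qed.

Lemma Lap_selfadjoint u v : ipV w r (Lap w r u) v = ipV w r u (Lap w r v).
Proof. by rewrite ipV_LapE dirichlet_sym -ipV_LapE ipV_sym. Qed.

Lemma Lap_eq0_const u : Lap w r u = 0 -> forall i j, u i = u j.
Proof.
move=> Lu0.
have edge_const a b : 0 < w a b -> u a = u b.
  move=> w_ab; have : dirichlet u u *+ 2 = 0.
    by rewrite -ipV_LapE Lu0 /ipV big1 ?mul0rn // => i _; rewrite mulr0 mul0r.
  have sq_ge0 i j : 0 <= w i j * ((u i - u j) * (u i - u j)).
    by rewrite mulr_ge0 // -expr2 sqr_ge0.
  rewrite dirichlet_symmetrized => /eqP; rewrite psumr_eq0 => [|i _]; last exact: sumr_ge0.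
  move/allP/(_ a (mem_index_enum _)); rewrite /= psumr_eq0 //.
  move/allP/(_ b (mem_index_enum _)); rewrite /= mulf_eq0 gt_eqF //= mulf_eq0 orbb.
  by rewrite subr_eq0 => /eqP.
move=> i j; have /connectP [p path_ij ->] := w_connected i j.
by elim: p i path_ij => [//|x p IH] i /= /andP [/edge_const -> /IH].
Qed.

Lemma linear_Lap : linear (Lap w r).
Proof.
move=> a u v; apply/funext => i.
rewrite /Lap !fctE /GRing.scale /= mulrCA -mulrDr; congr (_ * _).
by rewrite mulr_sumr -big_split; apply: eq_bigr => j _ /=; ring.
Qed.

Lemma linear_mass : linear (mass w r).
Proof.
move=> a u v; rewrite /mass !fctE /GRing.scale /= mulr_sumr -big_split.
by apply: eq_bigr => i _ /=; ring.
Qed.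

Lemma linear_ipV u : linear (ipV w r u).
Proof.
move=> a v v'; rewrite /ipV !fctE /GRing.scale /= mulr_sumr -big_split.
by apply: eq_bigr => i _ /=; ring.
Qed.

Lemma ipV_cst u c : ipV w r u (cst c) = c * mass w r u.
Proof. by rewrite /ipV /mass mulr_sumr; apply: eq_bigr => i _ /=; ring. Qed.

Lemma mass_cst c : mass w r (cst c) = c * \sum_i dr w r i.
Proof. by rewrite mulr_sumr; apply: eq_bigr => i _; rewrite mulrC. Qed.

Lemma mass_cst_eq0 c : mass w r (cst c) = 0 -> c = 0.
Proof. by rewrite mass_cst => /eqP; rewrite mulf_eq0 (gt_eqF sum_dr_gt0) orbF => /eqP. Qed.

Lemma Lap_cst c : Lap w r (cst c) = 0.
Proof. by apply/funext => i; rewrite /Lap big1 ?mulr0 // => j _; rewrite subrr mulr0. Qed.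

Lemma mass_Lap u : mass w r (Lap w r u) = 0.
Proof.
rewrite [LHS](_ : _ = ipV w r (Lap w r u) (cst 1)).
  by rewrite Lap_selfadjoint Lap_cst /ipV big1 // => i _; rewrite mulr0.
by apply: eq_bigr => i _; rewrite mulr1.
Qed.

(* [phi] is well defined: [u |-> Lap u + mass u] is injective, hence onto, and a
   preimage of a function of mass zero has mass zero. *)
Let linear_Lap_mass : linear (fun u => Lap w r u + cst (mass w r u)).
Proof.
move=> a u v; rewrite linear_Lap linear_mass; apply/funext => i.
by rewrite !fctE /GRing.scale /=; ring.
Qed.

Let Lap_mass_ker0 u : Lap w r u + cst (mass w r u) = 0 -> u = 0.
Proof.
move=> Lu_mu0; have mu0 : mass w r u = 0.
  apply: mass_cst_eq0; rewrite -[LHS]add0r -{1}(mass_Lap u) -(linear_mapD linear_mass).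
  by rewrite Lu_mu0 (linear_map0 linear_mass).
move: Lu_mu0; rewrite mu0 addr0 => /Lap_eq0_const u_const.
pose i0 := Ordinal (ltnW n_gt1).
have u_cst : u = cst (u i0) by apply/funext => i; apply: u_const.
by rewrite u_cst (@mass_cst_eq0 (u i0)) // -u_cst.
Qed.

Lemma mass_sub_avg u : mass w r (u - avg w r u) = 0.
Proof.
by rewrite (linear_mapB linear_mass) mass_cst divfK ?subrr // (gt_eqF sum_dr_gt0).
Qed.

Lemma phi_spec u : Lap w r (phi w r u) = u - avg w r u /\ mass w r (phi w r u) = 0.
Proof.
apply: (@xgetPex _ (fun _ => 0) [set p | Lap w r p = u - avg w r u /\ mass w r p = 0]).
have [p Lp_mp] := linear_surj_of_ker0 linear_Lap_mass Lap_mass_ker0 (u - avg w r u).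
suff mp0 : mass w r p = 0 by exists p; split => //; rewrite -Lp_mp mp0 addr0.
apply: mass_cst_eq0.
by rewrite -(mass_sub_avg u) -Lp_mp (linear_mapD linear_mass) mass_Lap add0r.
Qed.

Lemma phi_unique u p : Lap w r p = u - avg w r u -> mass w r p = 0 -> p = phi w r u.
Proof.
have [Lphi mphi] := phi_spec u => Lp mp; apply/eqP; rewrite -subr_eq0; apply/eqP.
apply: Lap_mass_ker0.
by rewrite (linear_mapB linear_Lap) (linear_mapB linear_mass) Lp Lphi mp mphi !subrr addr0.
Qed.

Lemma linear_avg : linear (avg w r).
Proof.
move=> a u v; apply/funext => i; rewrite /avg linear_mass !fctE /GRing.scale /=.
by rewrite mulrDl mulrA.
Qed.

Lemma linear_phi : linear (phi w r).
Proof.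
move=> a u v; have [Lphi_u mphi_u] := phi_spec u; have [Lphi_v mphi_v] := phi_spec v.
apply/esym/phi_unique; last by rewrite linear_mass mphi_u mphi_v addr0 [_ *: _]mulr0.
rewrite linear_Lap Lphi_u Lphi_v linear_avg; apply/funext => i.
by rewrite !fctE /GRing.scale /=; ring.
Qed.

Lemma phi_selfadjoint u v : ipV w r (phi w r u) v = ipV w r u (phi w r v).
Proof.
have [Lphi_u mphi_u] := phi_spec u; have [Lphi_v mphi_v] := phi_spec v.
have v_decomp : v = Lap w r (phi w r v) + avg w r v by rewrite Lphi_v subrK.
rewrite {1}v_decomp (linear_mapD (linear_ipV _)) ipV_cst mphi_u mulr0 addr0.
rewrite -Lap_selfadjoint Lphi_u ipV_sym (linear_mapB (linear_ipV _)) ipV_cst mphi_v.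
by rewrite mulr0 subr0 ipV_sym.
Qed.

Lemma linear_Lop : linear (Lop w r gamma).
Proof.
move=> a u v; apply/funext => i; rewrite /Lop linear_Lap linear_phi.
by rewrite !fctE /GRing.scale /=; ring.
Qed.

Lemma Lop_selfadjoint u v : ipV w r (Lop w r gamma u) v = ipV w r u (Lop w r gamma v).
Proof.
have ipV_LopE x y : ipV w r (Lop w r gamma x) y =
    ipV w r (Lap w r x) y + gamma * ipV w r (phi w r x) y.
  by rewrite /ipV mulr_sumr -big_split; apply: eq_bigr => i _ /=; rewrite /Lop; ring.
rewrite ipV_LopE [RHS]ipV_sym ipV_LopE Lap_selfadjoint phi_selfadjoint.
by congr (_ + _ * _); apply: ipV_sym.
Qed.

Lemma mass_Lop u : mass w r (Lop w r gamma u) = 0.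
Proof.
have [_ mphi_u] := phi_spec u.
rewrite -[Lop w r gamma u]/(Lap w r u + gamma *: phi w r u).
rewrite (linear_mapD linear_mass) (linear_mapZ linear_mass) mass_Lap mphi_u.
by rewrite add0r [_ *: _]mulr0.
Qed.

End GraphLaplacian.

Section SeriesLimits.
Local Open Scope classical_set_scope.
Variable R : realType.

Lemma cvgn_sum (I : Type) (s : seq I) (f : I -> nat -> R) (l : I -> R) :
  (forall i, f i @ \oo --> l i) ->
  (fun N => \sum_(i <- s) f i N) @ \oo --> \sum_(i <- s) l i.
Proof.
move=> f_cvg; elim: s => [|x s IH].
  by rewrite big_nil; under eq_fun do rewrite big_nil; apply: cvg_cst.
rewrite big_cons; under eq_fun do rewrite big_cons.
exact: (@cvgD _ _ _ _ _ (f x) (fun N => \sum_(i <- s) f i N)).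
Qed.

Lemma lim_series_head (f : nat -> R) : (forall k, f k.+1 = 0) -> limn (series f) = f 0%N.
Proof.
move=> f_tail0; apply/cvg_lim => //; rewrite -cvg_shiftS.
suff -> : (fun N => series f N.+1) = fun=> f 0%N by apply: cvg_cst.
by apply/funext => N; rewrite /series /= big_nat_recl // big1 ?addr0.
Qed.

End SeriesLimits.

Section SelfAdjointExponential.
Variables (R : realType) (n : nat) (d : 'I_n -> R) (F : ('I_n -> R) -> 'I_n -> R).
Hypothesis F_lin : linear F.

Local Notation "<< u , v >>" := (\sum_i d i * u i * v i).

Definition exp_coeffs (u : 'I_n -> R) i k := iter k F u i / k`!%:R.
Definition expF t u i := limn (pseries (exp_coeffs u i) t).

Lemma is_cvg_exp_series u i t : cvgn (pseries (exp_coeffs u i) t).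
Proof.
have [C C_ge0 FC] := linear_norm1_bounded F_lin.
have iter_bound k : `|iter k F u i| <= C ^+ k * norm1 u.
  apply: le_trans (norm_le_norm1 _ i) _.
  elim: k => [|k IH] /=; first by rewrite expr0 mul1r.
  by apply: le_trans (FC _) _; rewrite exprS -mulrA ler_wpM2l.
apply: normed_cvg; apply: (@series_le_cvg _ _ (norm1 u *: exp_coeff (C * `|t|))).
- by move=> k /=.
- by move=> k; rewrite mulr_ge0 ?sumr_ge0 ?exp_coeff_ge0 ?mulr_ge0.
- move=> k /=; rewrite /exp_coeffs !normrM normfV normrX.
  have -> : (norm1 u *: exp_coeff (C * `|t|)) k = C ^+ k * norm1 u * `|t| ^+ k / k`!%:R.
    by rewrite scalrfctE /GRing.scale /= /exp_coeff /= exprMn; ring.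
  by rewrite [`|k`!%:R|]ger0_norm // mulrAC ler_wpM2r ?invr_ge0 // ler_wpM2r ?exprn_ge0.
- exact/is_cvg_seriesZ/is_cvg_series_exp_coeff.
Qed.

Lemma exp_coeffs_diffs u i : pseries_diffs (exp_coeffs u i) = exp_coeffs (F u) i.
Proof.
apply/funext => k; rewrite /pseries_diffs /exp_coeffs iterSr /= factS natrM invfM.
by rewrite mulrCA; congr (_ * _); rewrite mulrA mulfV ?mul1r.
Qed.

Lemma is_derive_expF u i (t : R) : is_derive t (1 : R) (fun s => expF s u i) (expF t (F u) i).
Proof.
rewrite /expF -exp_coeffs_diffs; apply: (@pseries_snd_diffs _ _ (`|t| + 1)).
- exact: is_cvg_exp_series.
- by rewrite exp_coeffs_diffs; apply: is_cvg_exp_series.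
- by rewrite !exp_coeffs_diffs; apply: is_cvg_exp_series.
- by rewrite (@ger0_norm _ (`|t| + 1)) ?ltrDl // addr_ge0.
Qed.

Lemma expF_weighted_sum (a : 'I_n -> R) (g : nat -> R) u t :
  (forall k, g k = \sum_i a i * exp_coeffs u i k) ->
  \sum_i a i * expF t u i = limn (pseries g t).
Proof.
move=> gE; apply/esym/cvg_lim => //.
have -> : pseries g t = fun N => \sum_i a i * pseries (exp_coeffs u i) t N.
  apply/funext => N; rewrite /pseries /series /=.
  under eq_bigr do rewrite gE mulr_suml.
  rewrite exchange_big /=; apply: eq_bigr => i _.
  by rewrite mulr_sumr; apply: eq_bigr => k _; rewrite mulrA.
by apply: cvgn_sum => i; apply: cvgMl_tmp; apply: is_cvg_exp_series.
Qed.

Lemma linear_expF t : linear (expF t).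
Proof.
move=> a u v; apply/funext => i; rewrite !fctE /GRing.scale /=; apply/cvg_lim => //.
have -> : pseries (exp_coeffs (a *: u + v) i) t =
    fun N => a * pseries (exp_coeffs u i) t N + pseries (exp_coeffs v i) t N.
  apply/funext => N; rewrite /pseries /series /= mulr_sumr -big_split /=.
  apply: eq_bigr => k _; rewrite /exp_coeffs (linear_iter F_lin).
  by rewrite !fctE /GRing.scale /=; ring.
by apply: cvgD; [apply: cvgMl_tmp|]; apply: is_cvg_exp_series.
Qed.

Lemma expF_comm t u : expF t (F u) = F (expF t u).
Proof.
apply/funext => j; rewrite (linear_unit_funE F_lin); under [RHS]eq_bigr do rewrite mulrC.
apply/esym/expF_weighted_sum => k.
rewrite /exp_coeffs -iterSr /= (linear_unit_funE F_lin) mulr_suml.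
by apply: eq_bigr => i _; rewrite mulrCA mulrA.
Qed.

Lemma expF0 u : expF 0 u = u.
Proof.
apply/funext => i; rewrite /expF /pseries lim_series_head => [|k] /=.
  by rewrite /exp_coeffs expr0 divr1 mulr1.
by rewrite expr0n mulr0.
Qed.

Lemma expF_mass t u : (forall x, \sum_i d i * F x i = 0) ->
  \sum_i d i * expF t u i = \sum_i d i * u i.
Proof.
move=> F_mass0; rewrite (@expF_weighted_sum d (fun k => \sum_i d i * exp_coeffs u i k)) //.
rewrite /pseries lim_series_head => [|k] /=.
  by rewrite expr0 mulr1; apply: eq_bigr => i _; rewrite /exp_coeffs /= divr1.
rewrite /exp_coeffs /=.
by under eq_bigr do rewrite mulrA; rewrite -mulr_suml F_mass0 !mul0r.
Qed.

Hypothesis F_selfadjoint : forall u v, << F u, v >> = << u, F v >>.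

Lemma iter_selfadjoint k u v : << iter k F u, v >> = << u, iter k F v >>.
Proof. by elim: k v => [//|k IH] v; rewrite /= F_selfadjoint IH -iterSr. Qed.

Lemma expF_selfadjoint t u v : << expF t u, v >> = << u, expF t v >>.
Proof.
pose g k := << iter k F u, v >> / k`!%:R.
transitivity (limn (pseries g t)).
  under eq_bigr do rewrite mulrAC.
  apply: expF_weighted_sum => k; rewrite /g mulr_suml.
  by apply: eq_bigr => i _; rewrite /exp_coeffs; ring.
symmetry; apply: expF_weighted_sum => k; rewrite /g iter_selfadjoint mulr_suml.
by apply: eq_bigr => i _; rewrite /exp_coeffs; ring.
Qed.

Lemma expF_pairing_shift x c s : << expF (- s) x, expF (s + c) x >> = << x, expF c x >>.
Proof.
have <- : << expF (- 0) x, expF (0 + c) x >> = << x, expF c x >>.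
  by rewrite oppr0 add0r expF0.
apply: (@is_derive_0_is_cst _ (fun s => << expF (- s) x, expF (s + c) x >>)) => {}s.
have d_neg i : is_derive s 1 (fun s => expF (- s) x i) (- expF (- s) (F x) i).
  have := is_derive1_comp (is_derive_expF x i (- s)) (is_deriveNid s 1).
  by rewrite mulrN1.
have d_shift i : is_derive s 1 (fun s => expF (s + c) x i) (expF (s + c) (F x) i).
  have := @is_derive1_comp _ (fun t => expF t x i) (shift c) s _ _
    (is_derive_expF x i (s + c)) (is_derive_shift s 1 c).
  by rewrite mulr1.
have -> : (fun s => << expF (- s) x, expF (s + c) x >>) =
    \sum_i d i \*: ((fun s => expF (- s) x i) * (fun s => expF (s + c) x i)).
  by rewrite fct_sumE; apply/funext => t; apply: eq_bigr => i _; rewrite -mulrA.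
have := is_derive_sum (fun i => is_deriveZ (d i) (is_deriveM (d_neg i) (d_shift i))).
move/is_derive_eq; apply; rewrite /= !expF_comm /GRing.scale /=.
rewrite (_ : \sum_i _ = << expF (- s) x, F (expF (s + c) x) >> -
                        << F (expF (- s) x), expF (s + c) x >>).
  by rewrite F_selfadjoint subrr.
by rewrite -sumrB; apply: eq_bigr => i _; ring.
Qed.

Hypothesis d_gt0 : forall i, 0 < d i.

Lemma ip_self_gt0 y : y <> 0 -> 0 < << y, y >>.
Proof.
move=> y_neq0; have terms_ge0 i : 0 <= d i * y i * y i.
  by rewrite -mulrA -expr2 mulr_ge0 ?sqr_ge0 ?ltW.
rewrite lt_def sumr_ge0 // andbT.
apply/eqP => /(psumr_eq0P (fun i _ => terms_ge0 i)) y_sq0.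
apply: y_neq0; apply/funext => i; move/eqP: (y_sq0 i isT).
by rewrite -mulrA mulf_eq0 (gt_eqF (d_gt0 i)) /= mulf_eq0 orbb => /eqP.
Qed.

(* [<< x, e^{cF} x >> = << e^{cF/2} x, e^{cF/2} x >>], and [e^{cF/2}] is injective. *)
Lemma expF_posdef c x : x <> 0 -> 0 < << x, expF c x >>.
Proof.
move=> x_neq0; rewrite -(expF_pairing_shift x c (- (c / 2))) opprK.
have -> : - (c / 2) + c = c / 2 by lra.
apply: ip_self_gt0 => half0.
have : << x, x >> = 0.
  rewrite -{2}(expF0 x) -(expF_pairing_shift x 0 (- (c / 2))) opprK addr0 half0.
  by apply: big1 => i _ /=; rewrite mulr0 mul0r.
by move/eqP; rewrite (gt_eqF (ip_self_gt0 x_neq0)).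
Qed.

End SelfAdjointExponential.

Section Energy.
Variables (R : realType) (n : nat) (w : 'I_n -> 'I_n -> R) (r gamma tau M : R).
Hypothesis graph_w : is_graph w.

Let Lop_lin := linear_Lop r gamma graph_w.

Lemma expL_expF u : expL w r gamma tau u = expF (Lop w r gamma) (- tau) u.
Proof.
apply/funext => i; congr (limn (series _)); apply/funext => k /=.
by rewrite /exp_coeffs; ring.
Qed.

Lemma linear_expL : linear (expL w r gamma tau).
Proof. by move=> a u v; rewrite !expL_expF (linear_expF Lop_lin). Qed.

Lemma mass_expL u : mass w r (expL w r gamma tau u) = mass w r u.
Proof. by rewrite expL_expF; apply: expF_mass => //; apply: mass_Lop. Qed.

Lemma expL_selfadjoint u v :
  ipV w r (expL w r gamma tau u) v = ipV w r u (expL w r gamma tau v).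
Proof. by rewrite !expL_expF; apply: expF_selfadjoint => //; apply: Lop_selfadjoint. Qed.

Lemma expL_posdef u : u <> 0 -> 0 < ipV w r u (expL w r gamma tau u).
Proof.
by rewrite expL_expF; apply: expF_posdef => //; [apply: Lop_selfadjoint | apply: dr_gt0].
Qed.

Lemma JtauE u : mass w r u = M ->
  Jtau w r gamma tau u = M - ipV w r u (expL w r gamma tau u).
Proof.
move=> mu; rewrite /Jtau -mu -(mass_expL u) /mass -sumrB.
by apply: eq_bigr => i _; rewrite /chiV /=; ring.
Qed.

Lemma dJE u v : mass w r v = M ->
  dJ w r gamma tau u v = M - 2 * ipV w r (expL w r gamma tau u) v.
Proof.
move=> mv; rewrite /dJ -mv /ipV /mass mulr_sumr -sumrB.
by apply: eq_bigr => i _; rewrite /chiV; ring.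
Qed.

Lemma JtauB u v : mass w r u = M -> mass w r v = M ->
  Jtau w r gamma tau u - Jtau w r gamma tau v =
  dJ w r gamma tau u u - dJ w r gamma tau u v +
  ipV w r (v - u) (expL w r gamma tau (v - u)).
Proof.
move=> mu mv; rewrite !JtauE // !dJE // (linear_mapB linear_expL).
rewrite (linear_mapB (linear_ipV _ _ _)) !(ipV_sym _ _ (v - u)).
rewrite !(linear_mapB (linear_ipV _ _ _)) ![ipV _ _ (expL _ _ _ _ _) _]ipV_sym.
have cross : ipV w r u (expL w r gamma tau v) = ipV w r v (expL w r gamma tau u).
  by rewrite -expL_selfadjoint ipV_sym.
by rewrite cross; ring.
Qed.

Lemma Jtau_descent u v : KM w r M u -> KM w r M v ->
  dJ w r gamma tau u v <= dJ w r gamma tau u u ->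
  Jtau w r gamma tau v <= Jtau w r gamma tau u /\
  (Jtau w r gamma tau v = Jtau w r gamma tau u <-> v = u).
Proof.
move=> [_ mu] [_ mv] dJ_le; have J_sub := JtauB mu mv.
have [vu0|vu_neq0] := pselect (v - u = 0); first by rewrite (subr0_eq vu0).
have Q_gt0 := expL_posdef vu_neq0.
split; first by lra.
split => [J_eq|vu]; first by exfalso; lra.
by rewrite vu subrr in vu_neq0.
Qed.

End Energy.

Lemma descent_eventually_constant (R : realDomainType) (T : Type) (S : finType)
    (g : S -> T) (J : T -> R) (D : pred nat) (v : nat -> T) :
  (forall j k, (j <= k)%N -> D k -> D j) -> D 0%N ->
  (forall k, (1 <= k)%N -> D k -> exists s, v k = g s) ->
  (forall k, (1 <= k)%N -> D k ->
     J (v k) <= J (v k.-1) /\ (J (v k) = J (v k.-1) -> v k = v k.-1)) ->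
  exists K, D K /\ forall k, (K <= k)%N -> D k -> v k = v K.
Proof.
move=> D_down D0 v_fin v_desc.
have [[k0 [k0_gt0 Dk0]]|no_step] := pselect (exists k, (1 <= k)%N /\ D k); last first.
  exists 0%N; split => // -[//|k] _ Dk; exfalso; apply: no_step; by exists k.+1.
pose reached s := `[< exists k, [/\ (1 <= k)%N, D k & v k = g s] >].
have [s0 v_k0] := v_fin k0 k0_gt0 Dk0.
have reached_s0 : reached s0 by apply/asboolP; exists k0.
case: (Order.TotalTheory.arg_minP (J \o g) reached_s0) => s /asboolP[K [K_gt0 DK vK]] s_min.
have J_min k : (1 <= k)%N -> D k -> J (v K) <= J (v k).
  move=> k_gt0 Dk; have [s' vk] := v_fin k k_gt0 Dk.
  by rewrite vK vk; apply: s_min; apply/asboolP; exists k.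
exists K; split => // k /subnKC <-; elim: (k - K)%N => [|j IH] Dj; first by rewrite addn0.
have DKj : D (K + j)%N by apply: D_down Dj; rewrite addnS.
have [J_le J_eq] := v_desc (K + j.+1)%N (leq_trans K_gt0 (leq_addr _ _)) Dj.
rewrite addnS /= (IH DKj) in J_le J_eq; rewrite addnS in Dj *.
by apply: J_eq; apply/le_anti; rewrite J_le J_min.
Qed.

Section Scheme.
Variables (R : realType) (n : nat) (w : 'I_n -> 'I_n -> R) (r gamma tau M : R).
Hypothesis graph_w : is_graph w.

(* [s] is the ranking [l] of the scheme: vertex [x] sits at position [s^-1 x]. *)
Definition threshold_profile (s : {perm 'I_n}) (m : nat) : 'I_n -> R := fun x =>
  if ((s^-1)%g x < m)%N then 1
  else if (s^-1)%g x == m :> nat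
  then (dr w r x)^-1 * (M - \sum_(p < n | (p < m)%N) dr w r (s p))
  else 0.

Lemma mcOKMBO_step_profile vold vnew : mcOKMBO_step w r gamma tau M vold vnew ->
  exists (s : {perm 'I_n}) (m : 'I_n.+1), vnew = threshold_profile s m.
Proof.
case=> l [l_bij [_ [m [m_le _ _ vnewE]]]]; pose s := perm (bij_inj l_bij).
exists s, (Ordinal (m_le : (m < n.+1)%N)); apply/funext => x.
have lx : l ((s^-1)%g x) = x by rewrite -(permE (bij_inj l_bij)) permKV.
rewrite -{1}lx vnewE lx /threshold_profile /=.
by under [in RHS]eq_bigr do rewrite permE.
Qed.

Lemma mcOKMBO_step_argmin vold vnew : mcOKMBO_step w r gamma tau M vold vnew ->
  KM w r M vnew ->
  forall u, KM w r M u -> dJ w r gamma tau vold vnew <= dJ w r gamma tau vold u.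
Proof.
case=> l [l_bij [l_sorted [m [_ _ _ vnewE]]]] [_ mass_new] u [u01 mass_u].
apply: (@bathtub_principle _ _ (dr w r) (fun i => chiV R i - 2 * expL w r gamma tau vold i)
  vnew u l m) => //.
- by move=> i; apply/ltW/dr_gt0.
- by move=> p q pq; have := l_sorted p q pq; rewrite /chiV; lra.
- by move=> p pm; rewrite vnewE pm.
- by move=> p mp; rewrite vnewE ltnNge (ltnW mp) /= gtn_eqF.
- exact: (etrans mass_new (esym mass_u)).
Qed.

End Scheme.

Lemma le_N_leq j k N : (j <= k)%N -> le_N k N -> le_N j N.
Proof. by case: N => //= m jk km; apply: leq_trans jk km. Qed.

Unset Implicit Arguments.

Theorem lemma5p30 (R : realType) (n : nat) (w : 'I_n -> 'I_n -> R)
  (r gamma tau M : R) (N : option nat) (v : nat -> 'I_n -> R) :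
  is_graph w ->
  0 <= r <= 1 -> 0 <= gamma -> 0 < tau -> 0 <= M ->
  VabM w r M (v 0%N) ->
  (forall k : nat, (1 <= k)%N -> le_N k N -> VabM w r M (v k)) ->
  (forall k : nat, (1 <= k)%N -> le_N k N ->
     mcOKMBO_step w r gamma tau M (v k.-1) (v k)) ->
  [/\ (forall k : nat, (1 <= k)%N -> le_N k N ->
         KM w r M (v k) /\
         (forall u, KM w r M u ->
            dJ w r gamma tau (v k.-1) (v k) <= dJ w r gamma tau (v k.-1) u)),
      (forall k : nat, (1 <= k)%N -> le_N k N ->
         Jtau w r gamma tau (v k) <= Jtau w r gamma tau (v k.-1) /\
         (Jtau w r gamma tau (v k) = Jtau w r gamma tau (v k.-1)
            <-> v k = v k.-1)) &
      exists K : nat, le_N K N /\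
        forall k : nat, (K <= k)%N -> le_N k N -> v k = v K].
Proof.
(* e^{-tau L} is positive definite for every real tau. *)
move=> graph_w _ _ _ _ v0_ab v_ab v_step.
have KM_prev k : (1 <= k)%N -> le_N k N -> KM w r M (v k.-1).
  case: k => [//|[|k]] _ kN; first by case: v0_ab.
  by case: (v_ab k.+1 isT (le_N_leq (leqnSn _) kN)).
have v_argmin k : (1 <= k)%N -> le_N k N -> KM w r M (v k) /\
    forall u, KM w r M u -> dJ w r gamma tau (v k.-1) (v k) <= dJ w r gamma tau (v k.-1) u.
  move=> k_gt0 kN; have [KMk _] := v_ab k k_gt0 kN.
  by split=> //; apply: mcOKMBO_step_argmin (v_step k k_gt0 kN) KMk.
have v_descent k : (1 <= k)%N -> le_N k N ->
    Jtau w r gamma tau (v k) <= Jtau w r gamma tau (v k.-1) /\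
    (Jtau w r gamma tau (v k) = Jtau w r gamma tau (v k.-1) <-> v k = v k.-1).
  move=> k_gt0 kN; have [KMk v_opt] := v_argmin k k_gt0 kN.
  exact: (Jtau_descent graph_w (KM_prev k k_gt0 kN) KMk (v_opt _ (KM_prev k k_gt0 kN))).
split => //; apply: (@descent_eventually_constant _ _ _
  (fun sm : {perm 'I_n} * 'I_n.+1 => threshold_profile w r M sm.1 sm.2)
  (Jtau w r gamma tau) (le_N ^~ N)).
- by move=> j k; apply: le_N_leq.
- by rewrite /= /le_N; case: (N).
- move=> k k_gt0 kN; have [s [m ->]] := mcOKMBO_step_profile (v_step k k_gt0 kN).
  by exists (s, m).
- by move=> k k_gt0 kN; have [J_le J_iff] := v_descent k k_gt0 kN; split=> // /J_iff.
Qed.
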